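(* Let $q$ be a prime power, $1\le h\le T$ integers, and $p(r)$, $r=0,\dots,h$, a probability distribution. The discrete memoryless channel with input alphabet $\mathcal{P}(\mathbb{F}_q^T,h)$, output alphabet $\bigcup_{r=0}^h \mathcal{P}(\mathbb{F}_q^T,r)$, and transition probabilities $$W(V\mid U) = \begin{cases} \dfrac{p(h-\dim V)}{\binom{h}{\dim V}_q}, & V\subseteq U,\\ 0, & \text{otherwise,}\end{cases}$$ (which, by Theorem 3, is the channel from $\langle\mathbf{X}\rangle$ to $\langle \mathbf{G}\mathbf{X}\rangle$ when $\mathbf{X}$ is a uniformly random ordered basis of the input subspace and $\mathbf{G}$ is an independent random $h\times h$ matrix over $\mathbb{F}_q$ with rank deficiency distribution $p$) has capacity $$C = \max_{P_{\mathbf{U}}} I(\mathbf{U};\mathbf{V}) = \sum_{r=0}^h p(r)\,\log \frac{\binom{T}{h-r}_q}{\binom{h}{h-r}_q},$$ where the maximum is over all probability distributions on $\mathcal{P}(\mathbb{F}_q^T,h)$.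
   Context: $\mathbb{F}_q$ is the finite field with $q$ elements; for a matrix $M$, $\langle M\rangle$ is its row space. $\mathcal{P}(\mathbb{F}_q^T,k)$ is the set of $k$-dimensional subspaces of $\mathbb{F}_q^T$. $\binom{n}{\ell}_q = \prod_{i=0}^{\ell-1}\frac{q^{n-i}-1}{q^{\ell-i}-1}$ is the $q$-ary Gaussian coefficient (number of $\ell$-dimensional subspaces of an $n$-dimensional space over $\mathbb{F}_q$). The rank deficiency of an $h\times h$ matrix $G$ is $h-\operatorname{rank}G$, and $p(r)$ is the probability that the random transfer matrix has rank deficiency $r$. $I(\cdot;\cdot)$ denotes mutual information, with logarithms in a fixed base. *)

From HB Require Import structures.
From mathcomp Require Import all_boot all_order all_algebra all_field.
From Stdlib Require Import Reals.

Set Implicit Arguments.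
Unset Strict Implicit.
Unset Printing Implicit Defensive.

Notation "\rsum_ ( i : I | P ) E" := (\big[Rplus/R0]_(i : I | P) E)%R
  (at level 41, i, I at level 50, E at level 41) : R_scope.

(* A subspace of F^T is represented by its canonical generating matrix:
   a T x T matrix A with <<A>> = A (genmx is a canonical representative of
   the row space, cf. eq_genmx / genmx_id). *)
Definition is_subsp (F : finFieldType) (T : nat) (A : 'M[F]_T) : bool :=
  (<<A>>%MS == A).

Definition gauss (q : nat) (n l : nat) : R :=
  \big[Rmult/R1]_(i < l)
     ((INR q ^ (subn n i) - 1) / (INR q ^ (subn l i) - 1))%R.

Definition logb (b x : R) : R := (ln x / ln b)%R.

Definition Wch (F : finFieldType) (T h : nat) (p : nat -> R)
    (V U : 'M[F]_T) : R :=
  if (V <= U)%MS then (p (subn h (\rank V)) / gauss #|F| h (\rank V))%R else R0.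

Definition in_alph (F : finFieldType) (T h : nat) (U : 'M[F]_T) : bool :=
  is_subsp U && (\rank U == h).
Definition out_alph (F : finFieldType) (T h : nat) (V : 'M[F]_T) : bool :=
  is_subsp V && (\rank V <= h)%N.

Definition is_input_dist (F : finFieldType) (T h : nat) (P : 'M[F]_T -> R)
  : Prop :=
  (forall U, 0 <= P U)%R /\
  (forall U, ~~ in_alph h U -> P U = 0%R) /\
  (\rsum_(U : 'M[F]_T | in_alph h U) P U)%R = 1%R.

Definition out_dist (F : finFieldType) (T h : nat) (p : nat -> R)
    (P : 'M[F]_T -> R) (V : 'M[F]_T) : R :=
  (\rsum_(U : 'M[F]_T | in_alph h U) (P U * Wch h p V U))%R.

(* Mutual information I(U;V) in base b, with the convention 0 log 0 = 0. *)
Definition mutinf (F : finFieldType) (T h : nat) (p : nat -> R) (b : R)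
    (P : 'M[F]_T -> R) : R :=
  (\rsum_(U : 'M[F]_T | in_alph h U)
     \rsum_(V : 'M[F]_T | out_alph h V)
       (if Rlt_dec 0 (P U * Wch h p V U)
        then P U * Wch h p V U * logb b (Wch h p V U / out_dist h p P V)
        else 0))%R.

(* The r-dimensional subspaces of an n-dimensional space number [n r]_q, and
   double counting shows that an r-dimensional V lies in
   [T h]_q [h r]_q / [T r]_q of the h-dimensional subspaces. Hence the uniform
   input law induces the output law Q(V) = p(h - r) / [T r]_q, r = dim V, and
   wherever W(V|U) > 0 the density W(V|U) / Q(V) = [T r]_q / [h r]_q depends on
   r alone, so the uniform input achieves C. For any other input law, with
   output law P_V, I(U;V) = sum P_U W log(W / Q) + sum P_U W log(Q / P_V), where
   the first sum is C and the second is at most 0 since ln x <= x - 1. *)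

From HB Require Import structures.
From mathcomp Require Import all_boot all_order all_algebra all_field.
From mathcomp Require Import mxabelem.
From Stdlib Require Import Reals Lra.

Set Implicit Arguments.
Unset Strict Implicit.
Unset Printing Implicit Defensive.

(* Powers are written [expn]: with [Reals] loaded, [_ ^ _] in [nat_scope]
   denotes [Nat.pow]. *)
Lemma prod_expn_sub_gt0 q n s m : (1 < q)%nat -> (s + m <= n)%nat ->
  (0 < \prod_(i < m) (expn q n - expn q (s + i)))%nat.
Proof.
move=> q_gt1 le_n; apply: prodn_gt0 => i.
by rewrite subn_gt0 ltn_exp2l // (leq_trans _ le_n) // ltn_add2l.
Qed.

Definition subspaces_between (F : finFieldType) (T : nat) (V U : 'M[F]_T) n :=
  [set W : 'M[F]_T | [&& is_subsp W, \rank W == n, (V <= W)%MS & (W <= U)%MS]].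

Local Open Scope ring_scope.
Notation subspaces U r := (subspaces_between 0 U r).
Notation superspaces V n := (subspaces_between V 1%:M n).
Local Close Scope ring_scope.

Section SubspaceCounting.

Local Open Scope ring_scope.

Variables (F : finFieldType) (T : nat).
Local Notation q := #|F|.

Lemma mxrank_adds_row k (v : 'rV[F]_T) (X : 'M[F]_(k, T)) :
  \rank (v + X)%MS = (\rank X + ~~ (v <= X)%MS)%nat.
Proof.
case: (boolP (v <= X)%MS) => [vX | vNX] /=.
  by rewrite addn0; apply/eqmx_rank/eqmxP/addsmx_idPr.
apply/eqP; rewrite eqn_leq addn1 (ltn_leqif (mxrank_leqif_sup (addsmxSr v X))).
rewrite addsmx_sub (negbTE vNX) andbT.
apply: leq_trans (mxrank_adds_leqif v X) _.
by rewrite -[(\rank X).+1]add1n leq_add2r rank_leq_row.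
Qed.

Lemma addn_bool_eqS a k (b : bool) :
  (a <= k)%nat -> (a + b == k.+1)%nat = (a == k) && b.
Proof.
case: b => le_ak; first by rewrite addn1 eqSS andbT.
by rewrite addn0 andbF ltn_eqF // ltnS.
Qed.

(* Choosing the rows of [B] one at a time, the [i]-th row must lie in [U]
   but outside the [\rank V + i]-dimensional span of [V] and the rows before. *)
Lemma card_extensions k l m (V : 'M[F]_(k, T)) (U : 'M[F]_(l, T)) : (V <= U)%MS ->
  #|[set B : 'M[F]_(m, T) | (B <= U)%MS && (\rank (V + B)%MS == \rank V + m)%nat]|
   = (\prod_(i < m) (expn q (\rank U) - expn q (\rank V + i)))%nat.
Proof.
move=> VU; elim: m => [|m IHm].
  rewrite big_ord0 (@eq_card1 _ (0 : 'M[F]_(0, T))) // => B.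
  by rewrite !inE [B]flatmx0 sub0mx addsmx0 addn0 !eqxx.
pose S m := [set B : 'M[F]_(m, T) | (B <= U)%MS && (\rank (V + B)%MS == \rank V + m)%nat].
have S_col_mx (v : 'rV[F]_T) (B : 'M[F]_(m, T)) :
    (col_mx v B \in S (1 + m)%nat) = [&& B \in S m, (v <= U)%MS & ~~ (v <= V + B)%MS].
  rewrite !inE col_mx_sub.
  rewrite -(adds_eqmx (eqmx_refl V) (addsmxE v B)) addsmxA [(V + v)%MS]addsmxC -addsmxA.
  have rVB : (\rank (V + B)%MS <= \rank V + m)%nat.
    by apply: leq_trans (mxrank_adds_leqif V B) _; rewrite leq_add2l rank_leq_row.
  rewrite mxrank_adds_row add1n addnS addn_bool_eqS //.
  by case: (v <= U)%MS; case: (B <= U)%MS; rewrite /= ?andbF ?andbT.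
rewrite big_ord_recr /= -IHm -sum_nat_const -sum1_card -/(S m.+1) -/(S m).
rewrite (partition_big (@dsubmx _ 1 m T) (mem (S m))) /=; last first.
  by move=> A; rewrite -{1}(vsubmxK A) S_col_mx => /andP[].
apply: eq_bigr => B SB.
rewrite (reindex (fun v => @col_mx _ 1 m T v B)) /=; last first.
  exists (@usubmx _ 1 m T) => [v _ | A]; first by rewrite col_mxKu.
  by rewrite inE => /andP[_ /eqP <-]; rewrite vsubmxK.
rewrite (eq_bigl (mem (rowg U :\: rowg (V + B)%MS))); last first.
  by move=> v; rewrite col_mxKd eqxx S_col_mx SB !inE /= andbT andbC.
move: SB; rewrite inE => /andP[BU /eqP rVB].
have VBU : rowg (V + B)%MS \subset rowg U by rewrite rowgS addsmx_sub VU.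
by rewrite sum1_card cardsD (setIidPr VBU) !card_rowg rVB.
Qed.

Lemma genmx_eq_subsp k (X : 'M[F]_(k, T)) (W : 'M[F]_T) : is_subsp W ->
  (<<X>>%MS == W) = (X <= W)%MS && (\rank X == \rank W).
Proof.
move=> /eqP sW; apply/eqP/andP => [<- | [XW /eqP rXW]].
  by rewrite genmxE mxrank_gen.
by rewrite -sW; apply/eq_genmx/eqmxP; rewrite -(mxrank_leqif_eq XW) rXW.
Qed.

(* Sort the [n - \rank V]-row extensions [B] of [V] inside [U] by the space
   [<<V + B>>] they span: each [n]-dimensional [W] between [V] and [U] gets
   the extensions of [V] inside [W]. *)
Lemma card_subspaces_between_mul (V U : 'M[F]_T) n :
  (V <= U)%MS -> (\rank V <= n)%nat ->
  (#|subspaces_between V U n|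
     * \prod_(i < n - \rank V) (expn q n - expn q (\rank V + i))
   = \prod_(i < n - \rank V) (expn q (\rank U) - expn q (\rank V + i)))%nat.
Proof.
move=> VU rVn; rewrite -(card_extensions _ VU) -[RHS]sum1_card.
rewrite (partition_big (fun B : 'M[F]_(n - \rank V, T) => <<(V + B)%MS>>%MS)
                       (mem (subspaces_between V U n))) /=; last first.
  move=> B; rewrite !inE /is_subsp genmx_id mxrank_gen !genmxE addsmxSl subnKC //.
  by case/andP=> BU ->; rewrite eqxx addsmx_sub VU.
rewrite -sum_nat_const; apply: eq_bigr => W; rewrite inE => /and4P[sW /eqP rW VW WU].
have := card_extensions (n - \rank V) VW; rewrite rW => <-.
rewrite -sum1_card; apply: eq_bigl => B.
rewrite !inE genmx_eq_subsp // rW subnKC // addsmx_sub VW /=.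
by case: (boolP (B <= W)%MS) => BW; rewrite ?(submx_trans BW WU) /= ?andbb ?andbF.
Qed.

Lemma in_subspaces1 n (U : 'M[F]_T) : (U \in subspaces 1%:M n) = in_alph n U.
Proof. by rewrite inE sub0mx submx1 /= andbT. Qed.

Lemma in_superspaces n (V U : 'M[F]_T) :
  (U \in superspaces V n) = in_alph n U && (V <= U)%MS.
Proof. by rewrite inE submx1 andbT andbA. Qed.

Lemma card_subspaces_mul (U : 'M[F]_T) (r : nat) :
  (#|subspaces U r| * \prod_(i < r) (expn q r - expn q i)
   = \prod_(i < r) (expn q (\rank U) - expn q i))%nat.
Proof.
by have := @card_subspaces_between_mul 0 U r (sub0mx T U); rewrite mxrank0 subn0; apply.
Qed.

Lemma card_superspaces_mul (V : 'M[F]_T) n : (\rank V <= n)%nat ->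
  (#|superspaces V n| * \prod_(i < n - \rank V) (expn q n - expn q (\rank V + i))
   = \prod_(i < n - \rank V) (expn q T - expn q (\rank V + i)))%nat.
Proof. by move/(card_subspaces_between_mul (submx1 V)); rewrite mxrank1. Qed.

Lemma card_superspaces_rank (V V' : 'M[F]_T) n :
  \rank V = \rank V' -> (\rank V <= n)%nat ->
  #|superspaces V n| = #|superspaces V' n|.
Proof.
move=> rVV' rVn; apply/eqP.
have := prod_expn_sub_gt0 (card_finNzRing_gt1 F) (eq_leq (subnKC rVn)).
move/eqn_pmul2r <-.
by rewrite card_superspaces_mul // rVV' card_superspaces_mul // -rVV'.
Qed.

(* Both sides count the pairs [V <= U] with [\rank V = r] and [\rank U = n]. *)
Lemma sum_card_subspaces (n r : nat) :
  (\sum_(U in subspaces (1%:M : 'M[F]_T) n) #|subspaces U r|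
   = \sum_(V in subspaces (1%:M : 'M[F]_T) r) #|superspaces V n|)%nat.
Proof.
transitivity (\sum_(U in subspaces (1%:M : 'M[F]_T) n)
                \sum_(V in subspaces (1%:M : 'M[F]_T) r | (V <= U)%MS) 1)%nat.
  apply: eq_bigr => U _; rewrite -sum1_card; apply: eq_bigl => V.
  by rewrite !inE sub0mx submx1 /= andbT andbA.
rewrite (exchange_big_dep (mem (subspaces 1%:M r))) /=; last by move=> U V _ /andP[].
apply: eq_bigr => V VS; rewrite -sum1_card; apply: eq_bigl => U.
by rewrite VS !inE sub0mx submx1 !andbT /= andbA.
Qed.
End SubspaceCounting.

HB.instance Definition _ := Monoid.isComLaw.Build R R0 Rplus
  (fun x y z => esym (Rplus_assoc x y z)) Rplus_comm Rplus_0_l.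
HB.instance Definition _ := Monoid.isComLaw.Build R R1 Rmult
  (fun x y z => esym (Rmult_assoc x y z)) Rmult_comm Rmult_1_l.
HB.instance Definition _ := Monoid.isMulLaw.Build R R0 Rmult Rmult_0_l Rmult_0_r.
HB.instance Definition _ := Monoid.isAddLaw.Build R Rmult Rplus
  Rmult_plus_distr_r Rmult_plus_distr_l.

Lemma big_ord_subr (A : Type) (idx : A) (op : Monoid.com_law idx) n (g : nat -> A) :
  \big[op/idx]_(r < n.+1) g (n - r)%nat = \big[op/idx]_(r < n.+1) g r.
Proof.
rewrite (reindex_inj rev_ord_inj) /=; apply: eq_bigr => i _.
by rewrite subSS subKn // -ltnS.
Qed.

Local Open Scope R_scope.

Lemma rsum_ge0 (I : Type) (r : seq I) (P : pred I) (G : I -> R) :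
  (forall i, P i -> 0 <= G i) -> 0 <= \big[Rplus/R0]_(i <- r | P i) G i.
Proof. by move=> G_ge0; apply: big_ind => //; [lra | move=> x y; lra]. Qed.

Lemma rsum_le (I : Type) (r : seq I) (P : pred I) (G1 G2 : I -> R) :
  (forall i, P i -> G1 i <= G2 i) ->
  \big[Rplus/R0]_(i <- r | P i) G1 i <= \big[Rplus/R0]_(i <- r | P i) G2 i.
Proof. by move=> le_G; apply: big_ind2 => //; [lra | move=> *; lra]. Qed.

Lemma rsum_const (I : finType) (A : {pred I}) (c : R) :
  \big[Rplus/R0]_(i in A) c = INR #|A| * c.
Proof.
rewrite big_const; elim: #|A| => [|k IHk]; first by rewrite /=; lra.
by rewrite S_INR /= IHk; lra.
Qed.

Lemma INR_sum (I : Type) (r : seq I) (P : pred I) (G : I -> nat) :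
  INR (\sum_(i <- r | P i) G i)%nat = \big[Rplus/R0]_(i <- r | P i) INR (G i).
Proof. exact: (big_morph INR plus_INR). Qed.

Lemma INR_prod (I : Type) (r : seq I) (P : pred I) (G : I -> nat) :
  INR (\prod_(i <- r | P i) G i)%nat = \big[Rmult/R1]_(i <- r | P i) INR (G i).
Proof. exact: (big_morph INR mult_INR). Qed.

Lemma INR_expn (q k : nat) : INR (expn q k) = INR q ^ k.
Proof. by elim: k => [|k IHk] //; rewrite expnS mult_INR IHk. Qed.

Lemma ln_gt0 x : 1 < x -> 0 < ln x.
Proof. by move=> x_gt1; rewrite -ln_1; apply: ln_increasing; lra. Qed.

Lemma ln_le_sub1 x : 0 < x -> ln x <= x - 1.
Proof. by move=> x_gt0; have := exp_ineq1_le (ln x); rewrite exp_ln //; lra. Qed.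

Section GaussianCoefficient.
Variable q : nat.
Hypothesis q_gt1 : (1 < q)%nat.

Lemma pow_INR_gt1 k : (0 < k)%nat -> 1 < INR q ^ k.
Proof. by move=> /ltP k_gt0; apply: Rlt_pow_R1 => //; apply: lt_1_INR; apply/ltP. Qed.

Lemma gauss_gt0 n r : (r <= n)%nat -> 0 < gauss q n r.
Proof.
move=> le_rn; apply: (big_ind (fun x => 0 < x)); [lra | exact: Rmult_lt_0_compat |].
move=> i _; have lt_ir := ltn_ord i.
have [] : 1 < INR q ^ (n - i)%nat /\ 1 < INR q ^ (r - i)%nat.
  by split; apply: pow_INR_gt1; rewrite subn_gt0 // (leq_trans lt_ir).
by move=> *; apply: Rdiv_lt_0_compat; lra.
Qed.

(* [q ^ n - q ^ i = q ^ i * (q ^ (n - i) - 1)]: the powers [q ^ i] cancel. *)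
Lemma gauss_mul_prod n r : (r <= n)%nat ->
  gauss q n r * INR (\prod_(i < r) (expn q r - expn q i))%nat
  = INR (\prod_(i < r) (expn q n - expn q i))%nat.
Proof.
move=> le_rn; rewrite !INR_prod /gauss -big_split /=; apply: eq_bigr => i _.
have lt_ir := ltn_ord i; have le_in : (i <= n)%nat by rewrite ltnW ?(leq_trans lt_ir).
rewrite !minus_INR; try by apply/leP; rewrite leq_exp2l // ltnW.
have pow_split m : (i <= m)%nat -> INR (expn q m) = INR q ^ i * INR q ^ (m - i)%nat.
  by move=> le_im; rewrite -pow_add -INR_expn plusE subnKC.
rewrite (pow_split r (ltnW lt_ir)) (pow_split n le_in) INR_expn.
have := @pow_INR_gt1 (r - i)%nat; rewrite subn_gt0 => /(_ lt_ir).
set x := INR q ^ (r - i)%nat => x_gt1; by field; lra.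
Qed.
End GaussianCoefficient.

Section SubspaceCountingReal.
Variables (F : finFieldType) (T : nat).
Local Notation G := (gauss #|F|).

Lemma gauss_card_gt0 n r : (r <= n)%nat -> 0 < G n r.
Proof. exact/gauss_gt0/card_finNzRing_gt1. Qed.

Lemma card_subspaces_INR (U : 'M[F]_T) r : (r <= \rank U)%nat ->
  INR #|subspaces U r| = G (\rank U) r.
Proof.
move=> le_rU; have q_gt1 := card_finNzRing_gt1 F.
apply: (Rmult_eq_reg_r (INR (\prod_(i < r) (expn #|F| r - expn #|F| i)))).
  by rewrite -mult_INR multE card_subspaces_mul gauss_mul_prod.
by apply/not_0_INR/eqP; rewrite -lt0n (prod_expn_sub_gt0 (s := 0)).
Qed.

Lemma card_superspaces_INR (V : 'M[F]_T) n : (\rank V <= n <= T)%nat ->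
  INR #|superspaces V n| = G T n * G n (\rank V) / G T (\rank V).
Proof.
case/andP=> rVn nT; have := f_equal INR (sum_card_subspaces F T n (\rank V)).
rewrite !INR_sum [LHS](eq_bigr (fun=> G n (\rank V))); last first.
  by move=> U; rewrite inE => /and4P[_ /eqP rU _ _]; rewrite card_subspaces_INR rU.
rewrite [RHS](eq_bigr (fun=> INR #|superspaces V n|)); last first.
  by move=> W; rewrite inE => /and4P[_ /eqP rW _ _]; rewrite (card_superspaces_rank rW) ?rW.
rewrite !rsum_const !card_subspaces_INR mxrank1 ?(leq_trans rVn) // => E.
have Gr := gauss_card_gt0 (leq_trans rVn nT); rewrite E; field; lra.
Qed.
End SubspaceCountingReal.

Lemma xlogb_div_le b a w Pv Qv L : 1 < b -> 0 <= a -> a <= Pv ->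
  (0 < a -> 0 < w /\ 0 < Qv /\ w / Qv = L) ->
  (if Rlt_dec 0 a then a * logb b (w / Pv) else 0)
  <= a * logb b L + (a * Qv / Pv - a) / ln b.
Proof.
move=> b_gt1 a_ge0 le_aPv wQvL.
have lnb_gt0 := ln_gt0 b_gt1.
case: Rlt_dec => [a_gt0 | a_le0] /=; last first.
  have -> : a = 0 by lra.
  by rewrite /Rdiv; lra.
have [w_gt0 [Qv_gt0 <-]] := wQvL a_gt0; have Pv_gt0 : 0 < Pv by lra.
have QvPv_gt0 : 0 < Qv / Pv by apply: Rdiv_lt_0_compat.
have wQv_gt0 : 0 < w / Qv by apply: Rdiv_lt_0_compat.
have -> : w / Pv = w / Qv * (Qv / Pv) by field; lra.
rewrite /logb ln_mult //.
have := ln_le_sub1 QvPv_gt0; set y := ln (Qv / Pv) => y_le.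
have -> : a * ((ln (w / Qv) + y) / ln b) = a * (ln (w / Qv) / ln b) + a * y / ln b.
  by field; lra.
have -> : (a * Qv / Pv - a) / ln b = a * (Qv / Pv - 1) / ln b by field; lra.
apply: Rplus_le_compat_l; apply: Rmult_le_compat_r; first by left; apply: Rinv_0_lt_compat.
by apply: Rmult_le_compat_l; lra.
Qed.

Section Channel.
Variables (F : finFieldType) (T h : nat) (p : nat -> R).
Hypothesis h_le_T : (h <= T)%nat.
Hypothesis p_ge0 : forall r, (r <= h)%nat -> 0 <= p r.
Local Notation G := (gauss #|F|).
Local Notation W := (Wch h p).

Lemma sum_out_alph_submx (U : 'M[F]_T) (f : nat -> R) : (h <= \rank U)%nat ->
  \big[Rplus/R0]_(V : 'M[F]_T | out_alph h V) (if (V <= U)%MS then f (\rank V) else 0)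
  = \big[Rplus/R0]_(r < h.+1) (f r * G (\rank U) r).
Proof.
move=> hU; rewrite -big_mkcondr /=.
rewrite (partition_big (fun V : 'M[F]_T => inord (\rank V) : 'I_h.+1) xpredT) //=.
apply: eq_bigr => r _; have le_rh : (r <= h)%nat by rewrite -ltnS.
rewrite (eq_bigl (fun V => V \in subspaces U r)); last first.
  move=> V; rewrite !inE /out_alph sub0mx /=; case: (boolP (\rank V <= h)%nat) => rVh.
    by rewrite -val_eqE /= inordK //; case: is_subsp; case: (V <= U)%MS; case: (_ == _).
  rewrite andbF /=; apply/esym/negbTE; apply: contra rVh => /and3P[_ /eqP -> _] //.
rewrite (eq_bigr (fun=> f r)); last by move=> V; rewrite inE => /and4P[_ /eqP -> _ _].
by rewrite rsum_const card_subspaces_INR ?(leq_trans le_rh) // Rmult_comm.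
Qed.

Lemma sum_Wch (U : 'M[F]_T) (g : nat -> R) : in_alph h U ->
  \big[Rplus/R0]_(V : 'M[F]_T | out_alph h V) (W V U * g (\rank V))
  = \big[Rplus/R0]_(r < h.+1) (p (h - r)%nat * g r).
Proof.
case/andP=> _ /eqP rU.
transitivity (\big[Rplus/R0]_(V : 'M[F]_T | out_alph h V)
  (if (V <= U)%MS then p (h - \rank V)%nat / G h (\rank V) * g (\rank V) else 0)).
  by apply: eq_bigr => V _; rewrite /Wch; case: (V <= U)%MS; rewrite ?Rmult_0_l.
rewrite (sum_out_alph_submx (fun r => p (h - r)%nat / G h r * g r)) rU //.
apply: eq_bigr => r _.
by have G_gt0 := gauss_card_gt0 F (ltnSE (ltn_ord r)); field; lra.
Qed.

Lemma Wch_ge0 (V U : 'M[F]_T) : out_alph h V -> 0 <= W V U.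
Proof.
case/andP=> _ rVh; rewrite /Wch; case: (V <= U)%MS; last lra.
apply: Rmult_le_pos; first by apply: p_ge0; rewrite leq_subr.
by left; apply/Rinv_0_lt_compat/gauss_card_gt0.
Qed.

(* The output law of the uniform input, see [out_dist_unif]. *)
Definition out_ref (V : 'M[F]_T) : R := p (h - \rank V)%nat / G T (\rank V).

Lemma out_ref_ge0 V : out_alph h V -> 0 <= out_ref V.
Proof.
case/andP=> _ rVh; apply: Rmult_le_pos; first by apply: p_ge0; rewrite leq_subr.
by left; apply/Rinv_0_lt_compat/gauss_card_gt0/(leq_trans rVh).
Qed.

Lemma sum_out_ref : \big[Rplus/R0]_(r < h.+1) p r = 1 ->
  \big[Rplus/R0]_(V : 'M[F]_T | out_alph h V) out_ref V = 1.
Proof.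
move=> p_sum1; rewrite -[RHS]p_sum1 -[RHS](big_ord_subr _ h p).
transitivity (\big[Rplus/R0]_(r < h.+1) (p (h - r)%nat / G T r * G T r)); last first.
  apply: eq_bigr => r _; have le_rT : (r <= T)%nat by rewrite (leq_trans _ h_le_T) // -ltnS.
  by have G_gt0 := gauss_card_gt0 F le_rT; field; lra.
have := sum_out_alph_submx (U := scalar_mx (GRing.one _)) (fun r => p (h - r)%nat / G T r).
rewrite mxrank1 => /(_ h_le_T) <-.
by apply: eq_bigr => V _; rewrite submx1.
Qed.

Lemma Wch_div_out_ref (V U : 'M[F]_T) : out_alph h V -> 0 < W V U ->
  0 < out_ref V /\ W V U / out_ref V = G T (\rank V) / G h (\rank V).
Proof.
case/andP=> _ rVh; rewrite /Wch /out_ref; case: (V <= U)%MS; last lra.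
have GhV := gauss_card_gt0 F rVh; have GTV := gauss_card_gt0 F (leq_trans rVh h_le_T).
move=> W_gt0; have p_gt0 : 0 < p (h - \rank V)%nat.
  have [//|p0] := Rle_lt_or_eq_dec _ _ (p_ge0 (leq_subr (\rank V) h)).
  by move: W_gt0; rewrite -p0 /Rdiv Rmult_0_l; lra.
by split; [apply: Rdiv_lt_0_compat | field; lra].
Qed.

Lemma sum_joint (P : 'M[F]_T -> R) (g : nat -> R) :
  \big[Rplus/R0]_(U : 'M[F]_T | in_alph h U) P U = 1 ->
  \big[Rplus/R0]_(U : 'M[F]_T | in_alph h U) \big[Rplus/R0]_(V : 'M[F]_T | out_alph h V)
     (P U * W V U * g (\rank V))
  = \big[Rplus/R0]_(r < h.+1) (p (h - r)%nat * g r).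
Proof.
move=> P_sum1; rewrite -[RHS]Rmult_1_l -P_sum1 big_distrl /=.
apply: eq_bigr => U inU; rewrite -(sum_Wch g inU) big_distrr /=.
by apply: eq_bigr => V _; rewrite Rmult_assoc.
Qed.

Lemma sum_out_dist (P : 'M[F]_T -> R) :
  \big[Rplus/R0]_(U : 'M[F]_T | in_alph h U) P U = 1 ->
  \big[Rplus/R0]_(r < h.+1) p r = 1 ->
  \big[Rplus/R0]_(V : 'M[F]_T | out_alph h V) out_dist h p P V = 1.
Proof.
move=> P_sum1 p_sum1; rewrite /out_dist exchange_big /=.
transitivity (\big[Rplus/R0]_(U : 'M[F]_T | in_alph h U)
  \big[Rplus/R0]_(V : 'M[F]_T | out_alph h V) (P U * W V U * (fun=> 1) (\rank V))).
  by apply: eq_bigr => U _; apply: eq_bigr => V _; rewrite Rmult_1_r.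
rewrite (sum_joint (fun=> 1) P_sum1) -[RHS]p_sum1 -[RHS](big_ord_subr _ h p).
by apply: eq_bigr => r _; rewrite Rmult_1_r.
Qed.

Lemma out_dist_ge0 (P : 'M[F]_T -> R) V : (forall U, 0 <= P U) -> out_alph h V ->
  0 <= out_dist h p P V.
Proof.
by move=> P_ge0 outV; apply: rsum_ge0 => U _; apply/Rmult_le_pos/Wch_ge0.
Qed.

Lemma joint_le_out_dist (P : 'M[F]_T -> R) U V : (forall U, 0 <= P U) ->
  out_alph h V -> in_alph h U -> P U * W V U <= out_dist h p P V.
Proof.
move=> P_ge0 outV inU; rewrite /out_dist (bigD1 U) //=.
rewrite -[X in X <= _]Rplus_0_r; apply: Rplus_le_compat_l.
by apply: rsum_ge0 => U' _; apply/Rmult_le_pos/Wch_ge0.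
Qed.

Lemma sum_joint_slack_le (P : 'M[F]_T -> R) b V : 1 < b -> (forall U, 0 <= P U) ->
  out_alph h V ->
  \big[Rplus/R0]_(U : 'M[F]_T | in_alph h U)
     ((P U * W V U * out_ref V / out_dist h p P V - P U * W V U) / ln b)
  <= (out_ref V - out_dist h p P V) / ln b.
Proof.
move=> b_gt1 P_ge0 outV; have lnb_gt0 := ln_gt0 b_gt1.
rewrite (eq_bigr (fun U => P U * W V U * ((out_ref V / out_dist h p P V - 1) / ln b)));
  last by move=> U _; rewrite /Rdiv; ring.
rewrite -big_distrl /= -/(out_dist h p P V).
have Q_ge0 := out_ref_ge0 outV; have lnbV_gt0 := Rinv_0_lt_compat _ lnb_gt0.
case: (Rle_lt_or_eq_dec _ _ (out_dist_ge0 P_ge0 outV)) => [PV_gt0 | <-].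
  by apply: Req_le; field; lra.
by rewrite Rmult_0_l /Rdiv; apply: Rmult_le_pos; lra.
Qed.

(* Against [out_ref], the information density is the rank-dependent ratio of
   [Wch_div_out_ref]; the correction [log (out_ref V / out_dist V)] averages to
   at most [0] by [ln x <= x - 1] (Gibbs' inequality). *)
Lemma mutinf_le (b : R) (P : 'M[F]_T -> R) : 1 < b -> is_input_dist h P ->
  \big[Rplus/R0]_(r < h.+1) p r = 1 ->
  mutinf h p b P <= \big[Rplus/R0]_(r < h.+1) (p (h - r)%nat * logb b (G T r / G h r)).
Proof.
move=> b_gt1 [P_ge0 [_ P_sum1]] p_sum1; have lnb_gt0 := ln_gt0 b_gt1.
pose slack U V := (P U * W V U * out_ref V / out_dist h p P V - P U * W V U) / ln b.
apply: Rle_trans (_ : _ <= \big[Rplus/R0]_(U : 'M[F]_T | in_alph h U)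
   \big[Rplus/R0]_(V : 'M[F]_T | out_alph h V)
     (P U * W V U * logb b (G T (\rank V) / G h (\rank V)) + slack U V)) _.
  apply: rsum_le => U inU; apply: rsum_le => V outV.
  have a_ge0 := Rmult_le_pos _ _ (P_ge0 U) (Wch_ge0 U outV).
  apply: xlogb_div_le => //; first exact: joint_le_out_dist.
  move=> a_gt0; have W_gt0 : 0 < W V U by have := P_ge0 U; have := Wch_ge0 U outV; nra.
  by have [Q_gt0 ->] := Wch_div_out_ref outV W_gt0.
under eq_bigr do rewrite big_split /=.
rewrite big_split /= (sum_joint (fun r => logb b (G T r / G h r)) P_sum1).
rewrite -[X in _ <= X]Rplus_0_r; apply: Rplus_le_compat_l; rewrite exchange_big /=.
apply: Rle_trans (_ : _ <= \big[Rplus/R0]_(V : 'M[F]_T | out_alph h V)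
                            ((out_ref V - out_dist h p P V) / ln b)) _.
  by apply: rsum_le => V outV; exact: sum_joint_slack_le.
rewrite (eq_bigr (fun V => out_ref V / ln b + - (out_dist h p P V / ln b)));
  last by move=> V _; rewrite /Rdiv; ring.
rewrite big_split /= -(big_morph Ropp Ropp_plus_distr Ropp_0) -!big_distrl /=.
by rewrite sum_out_ref // sum_out_dist //; lra.
Qed.

Definition unif_in (U : 'M[F]_T) : R := if in_alph h U then / G T h else 0.

Lemma unif_in_dist : is_input_dist h unif_in.
Proof.
have GTh_gt0 := gauss_card_gt0 F h_le_T.
split; [|split].
- move=> U; rewrite /unif_in; case: in_alph; last lra.
  by left; apply: Rinv_0_lt_compat.
- by move=> U /negbTE; rewrite /unif_in => ->.
- rewrite (eq_bigr (fun=> / G T h)); last by move=> U inU; rewrite /unif_in inU.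
  rewrite (eq_bigl _ _ (fun U => esym (in_subspaces1 h U))) rsum_const.
  by rewrite card_subspaces_INR mxrank1 // Rinv_r //; lra.
Qed.

Lemma out_dist_unif V : out_alph h V -> out_dist h p unif_in V = out_ref V.
Proof.
case/andP=> _ rVh; rewrite /out_dist.
rewrite (eq_bigr (fun U => if (V <= U)%MS
                           then / G T h * (p (h - \rank V)%nat / G h (\rank V)) else 0));
  last by move=> U inU; rewrite /unif_in inU /Wch; case: (V <= U)%MS; rewrite ?Rmult_0_r.
rewrite -big_mkcondr /= (eq_bigl _ _ (fun U => esym (in_superspaces h V U))).
rewrite rsum_const card_superspaces_INR ?rVh // /out_ref.
have := gauss_card_gt0 F h_le_T; have := gauss_card_gt0 F rVh.
have := gauss_card_gt0 F (leq_trans rVh h_le_T).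
set x := gauss _ T h; set y := gauss _ h _; set z := gauss _ T _.
by move=> *; field; lra.
Qed.

Lemma mutinf_unif b :
  mutinf h p b unif_in
  = \big[Rplus/R0]_(r < h.+1) (p (h - r)%nat * logb b (G T r / G h r)).
Proof.
have [unif_ge0 [_ unif_sum1]] := unif_in_dist.
rewrite /mutinf -(sum_joint (fun r => logb b (G T r / G h r)) unif_sum1).
apply: eq_bigr => U inU; apply: eq_bigr => V outV.
have a_ge0 := Rmult_le_pos _ _ (unif_ge0 U) (Wch_ge0 U outV).
case: Rlt_dec => [a_gt0 | a_le0] /=; last first.
  have -> : unif_in U * W V U = 0 by lra.
  by rewrite Rmult_0_l.
have W_gt0 : 0 < W V U by have := unif_ge0 U; have := Wch_ge0 U outV; nra.
by rewrite out_dist_unif //; have [_ ->] := Wch_div_out_ref outV W_gt0.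
Qed.

End Channel.

Local Close Scope R_scope.

Theorem theorem4 (F : finFieldType) (T h : nat) (p : nat -> R) (b : R) :
  (1 <= h)%N -> (h <= T)%N -> (1 < b)%R ->
  (forall r, (r <= h)%N -> (0 <= p r)%R) ->
  (\big[Rplus/R0]_(r < h.+1) p r)%R = 1%R ->
  let C := (\big[Rplus/R0]_(r < h.+1)
              (p r * logb b (gauss #|F| T (subn h r) / gauss #|F| h (subn h r))))%R in
  (forall P : 'M[F]_T -> R, is_input_dist h P -> (mutinf h p b P <= C)%R) /\
  (exists P : 'M[F]_T -> R, is_input_dist h P /\ mutinf h p b P = C).
Proof.
move=> _ h_le_T b_gt1 p_ge0 p_sum1 C.
pose L r := logb b (gauss #|F| T r / gauss #|F| h r).
have -> : C = \big[Rplus/R0]_(r < h.+1) (p (h - r)%nat * L r)%R.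
  rewrite /C -(big_ord_subr _ h (fun r => p (h - r)%nat * L r)%R).
  by apply: eq_bigr => r _; rewrite subKn // -ltnS.
split; first by move=> P P_dist; exact: mutinf_le.
by exists (@unif_in F T h); split; [exact: unif_in_dist | exact: mutinf_unif].
Qed.
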